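(* Let $\mathcal{E}$ be a set, let $d\ge 1$, and let $x\mapsto \vec{x}\in\mathbb{R}^d$ be an arbitrary assignment of a vector to each element $x\in\mathcal{E}$. Fix vectors $w_1,b_1\in\mathbb{R}^d$ and define $g:\mathbb{R}^d\to\mathbb{R}^d$ by $g(\vec{v})=\mathrm{ReLU}(w_1\otimes \vec{v}+b_1)$, where $\otimes$ is component-wise multiplication and $\mathrm{ReLU}(u)=\max(0,u)$ is applied component-wise, and define $f(\vec{v})=\vec{v}+g(\vec{v})$. Define a binary relation $\prec$ on $\mathcal{E}$ by $$x\prec y \iff f(\vec{x})_i<\vec{y}_i \text{ for all } i=1,\dots,d.$$ Then $\prec$ is transitive: for any three distinct $x,y,z\in\mathcal{E}$, if $x\prec y$ and $y\prec z$ then $x\prec z$.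
   Context: $\vec{v}_i$ denotes the $i$-th component of $\vec{v}\in\mathbb{R}^d$. *)

From mathcomp Require Import all_boot all_order all_algebra.
Set Implicit Arguments. Unset Strict Implicit. Unset Printing Implicit Defensive.
Import Order.TTheory GRing.Theory Num.Theory.
Local Open Scope ring_scope.

Definition relu (R : realDomainType) (u : R) : R := Num.max 0 u.

Definition gmap (R : realDomainType) (d : nat) (w1 b1 v : 'rV[R]_d) : 'rV[R]_d :=
  \row_i relu (w1 0 i * v 0 i + b1 0 i).

Definition fmap (R : realDomainType) (d : nat) (w1 b1 v : 'rV[R]_d) : 'rV[R]_d :=
  v + gmap w1 b1 v.

Definition prec (R : realDomainType) (d : nat) (E : Type) (vec : E -> 'rV[R]_d)
  (w1 b1 : 'rV[R]_d) (x y : E) : Prop :=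
  forall i : 'I_d, fmap w1 b1 (vec x) 0 i < vec y 0 i.

From mathcomp Require Import all_boot all_order all_algebra.
Set Implicit Arguments. Unset Strict Implicit. Unset Printing Implicit Defensive.
Import Order.TTheory GRing.Theory Num.Theory.
Local Open Scope ring_scope.

Lemma relu_ge0 (R : realDomainType) (u : R) : 0 <= relu u.
Proof. by rewrite /relu le_max lexx. Qed.

Lemma fmap_ge (R : realDomainType) (d : nat) (w1 b1 v : 'rV[R]_d) (i : 'I_d) :
  v 0 i <= fmap w1 b1 v 0 i.
Proof. by rewrite /fmap /gmap !mxE lerDl relu_ge0. Qed.

Lemma prec_trans (R : realDomainType) (d : nat) (E : Type) (vec : E -> 'rV[R]_d)
    (w1 b1 : 'rV[R]_d) (x y z : E) :
  prec vec w1 b1 x y -> prec vec w1 b1 y z -> prec vec w1 b1 x z.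
Proof.
move=> hxy hyz i.
apply: lt_trans (hxy i) _.
exact: le_lt_trans (fmap_ge w1 b1 (vec y) i) (hyz i).
Qed.

Theorem theorem2 (R : realFieldType) (E : Type) (d : nat) (hd : (1 <= d)%N)
  (vec : E -> 'rV[R]_d) (w1 b1 : 'rV[R]_d) (x y z : E) :
  x <> y -> y <> z -> x <> z ->
  prec vec w1 b1 x y -> prec vec w1 b1 y z -> prec vec w1 b1 x z.
Proof. by move=> _ _ _; apply: prec_trans. Qed.
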